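(* Let $G$ be an $H(4,3)$-free graph with $m$ edges, $\rho=\rho(G)$, and $u^*\in V(G)$. Put $N=N(u^* )$, $W=V(G)\setminus N[u^*]$, $A^{+}=\{v\in N: v\text{ has a neighbor in }N\}$. Assume: $G[A^{+}]\cong K_4$; $e(W)=2$; every vertex of $W$ has at most one neighbor in $A^{+}$ and at least one neighbor in $W$; and \[ \rho^2-\rho\Bigl(e(A^{+})-|A^{+}|+\tfrac32-e(W)\Bigr)<2e(A^{+})+|A^{+}|+e(A^{+},W). \] Then $\rho^2-\frac32\rho<18$. Consequently, if $m\ge 24$ is even, then $\rho(G)<\rho'(m)$.
   Context: $H(4,3)$ is the graph obtained from a $4$-cycle and a triangle by identifying one vertex of the $4$-cycle with one vertex of the triangle; $H(4,3)$-free means containing no subgraph isomorphic to $H(4,3)$. $N[u^*]=N(u^* )\cup\{u^*\}$. For a vertex set $X$, $e(X)$ is the number of edges of the induced subgraph $G[X]$; for disjoint $X,Y$, $e(X,Y)$ is the number of edges between $X$ and $Y$. $\rho(G)$ is the adjacency spectral radius. For even $m$, $\rho'(m)$ is the largest real root of $p_m(x)=x^4-mx^2-(m-2)x+\frac{m}{2}-1$; it is known that $\rho'(m)>L_m:=\frac{1+\sqrt{4m-5}}{2}$ for even $m\ge 6$. *)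

From HB Require Import structures.
From mathcomp Require Import all_boot all_order all_algebra all_field.
Set Implicit Arguments. Unset Strict Implicit. Unset Printing Implicit Defensive.
Import Order.TTheory GRing.Theory Num.Theory.
Local Open Scope ring_scope.

Section Graphs.
Variable n : nat.
Variable adj : rel 'I_n.

Definition simple_graph : Prop := symmetric adj /\ irreflexive adj.

Definition nbhd (u : 'I_n) : {set 'I_n} := [set v | adj u v].

Definition edges_in (X : {set 'I_n}) : nat :=
  #|[set p : 'I_n * 'I_n | [&& (p.1 < p.2)%N, p.1 \in X, p.2 \in X & adj p.1 p.2]]|.

(* e(X,Y): number of edges between X and Y (X, Y disjoint) *)
Definition edges_between (X Y : {set 'I_n}) : nat :=
  #|[set p : 'I_n * 'I_n | [&& p.1 \in X, p.2 \in Y & adj p.1 p.2]]|.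

Definition nedges : nat := edges_in [set: 'I_n].

(* H(4,3): a 4-cycle v-a-b-c-v and a triangle v-d-f sharing the vertex v;
   H(4,3)-free = no (not necessarily induced) subgraph isomorphic to it *)
Definition H43_free : Prop :=
  ~ exists v a b c d f : 'I_n,
      [/\ uniq [:: v; a; b; c; d; f],
          [&& adj v a, adj a b, adj b c & adj c v] &
          [&& adj v d, adj d f & adj f v]].

Definition induces_K4 (X : {set 'I_n}) : Prop :=
  #|X| = 4%N /\ {in X &, forall x y, x != y -> adj x y}.

Definition adjmx : 'M[algC]_n := \matrix_(i, j) (adj i j)%:R.

Definition is_spectral_radius (r : algC) : Prop :=
  (exists2 l : algC, eigenvalue adjmx l & `|l| = r) /\
  (forall l : algC, eigenvalue adjmx l -> `|l| <= r).

End Graphs.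

Definition pm (m : nat) : {poly algC} :=
  'X^4 - (m%:R : algC) *: 'X^2 - ((m%:R : algC) - 2) *: 'X
  + ((m%:R : algC) / 2 - 1)%:P.

Definition is_rho' (m : nat) (r : algC) : Prop :=
  [/\ r \is Num.real, root (pm m) r &
      forall x : algC, x \is Num.real -> root (pm m) x -> x <= r].

From HB Require Import structures.
From mathcomp Require Import all_boot all_order all_algebra all_field.
From mathcomp Require Import zify ring lra.
Import Order.TTheory GRing.Theory Num.Theory.

Set Implicit Arguments.
Unset Strict Implicit.
Unset Printing Implicit Defensive.

(* Since G[A+] is a K4, e(A+) = 6 and |A+| = 4, so the hypothesis reads
   rho^2 - 3/2 rho < 16 + e(A+,W), and it suffices that e(A+,W) <= e(W) = 2.
   Sending an edge aw (a in A+, w in W) to an edge of G[W] at w is injective: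
   w has at most one neighbour in A+, and two adjacent vertices of W both
   attached to the K4 would span an H(4,3) with it.  Finally rho^2 - 3/2 rho < 18
   forces rho < 21/4, whereas p_m(21/4) <= 0 <= p_m(m) for m >= 24, so p_m has a
   real root beyond rho. *)

Section CompleteSubgraph.
Variable n : nat.

Lemma card_ltn_pairs (X : {set 'I_n}) :
  #|[set p in setX X X | (p.1 < p.2)%N]| = 'C(#|X|, 2).
Proof.
set A := setX X X; set L := [set p : 'I_n * 'I_n | (p.1 < p.2)%N].
set E := [set p : 'I_n * 'I_n | p.1 == p.2].
have -> : [set p in A | (p.1 < p.2)%N] = A :&: L by apply/setP => p; rewrite !inE.
pose sw (p : 'I_n * 'I_n) := (p.2, p.1).
have swK : involutive sw by case.
have upper : (A :\: L) :\: E = sw @: (A :&: L).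
  rewrite (can2_imset_pre _ swK swK); apply/setP => -[x y]; rewrite !inE /=.
  rewrite -(inj_eq val_inj) /=.
  by case: (x \in X); case: (y \in X); rewrite ?andbF //=; case: ltngtP.
have diag : (A :\: L) :&: E = (fun x => (x, x)) @: X.
  apply/setP => -[x y]; rewrite !inE /=; apply/idP/imsetP.
    by case/andP => /and3P [_ xX _] /eqP <-; exists x.
  by case=> z zX [-> ->]; rewrite eqxx ltnn zX.
have := cardsID L A; rewrite -(cardsID E (A :\: L)) upper diag cardsX.
rewrite card_imset; last by move=> x y [].
rewrite card_imset; last exact: can_inj swK.
rewrite bin2; set k := #|A :&: L|; set c := #|X| => cardA.
have -> : (c * c.-1 = k.*2)%N.
  by rewrite -mul2n -subn1 mulnBr muln1; lia.
by rewrite doubleK.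
Qed.

Variable adj : rel 'I_n.

Lemma edges_in_complete (X : {set 'I_n}) :
  {in X &, forall x y, x != y -> adj x y} -> edges_in adj X = 'C(#|X|, 2).
Proof.
move=> Xcomplete; rewrite -card_ltn_pairs; apply: eq_card => -[x y]; rewrite !inE /=.
case: ltnP => //= xy; case xX: (x \in X); case yX: (y \in X) => //=.
by apply: Xcomplete; rewrite // neq_ltn xy.
Qed.

End CompleteSubgraph.

Section FourSets.
Variables (T : finType) (X : {set T}).
Hypothesis cardX : #|X| = 4%N.

Lemma card4_remaining2 a b : a \in X -> b \in X -> a != b ->
  exists c d, {subset [:: a; b; c; d] <= X} /\ uniq [:: a; b; c; d].
Proof.
move=> aX bX ab.
have /cards2P [c [d [cd Xab]]] : #|X :\ a :\ b| == 2%N.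
  by move: cardX; rewrite (cardsD1 a) aX (cardsD1 b (X :\ a)) !inE eq_sym ab bX; lia.
have : c \in X :\ a :\ b /\ d \in X :\ a :\ b by rewrite Xab !inE !eqxx orbT.
rewrite !inE => -[/and3P [cb ca cX] /and3P [db da dX]].
exists c, d; split; first by apply/allP; rewrite /= aX bX cX dX.
by rewrite /= !inE !negb_or ab eq_sym ca eq_sym da eq_sym cb eq_sym db cd.
Qed.

Lemma card4_remaining3 a : a \in X ->
  exists b c d, {subset [:: a; b; c; d] <= X} /\ uniq [:: a; b; c; d].
Proof.
move=> aX; have /set0Pn [b] : X :\ a != set0.
  by rewrite -card_gt0; move: cardX; rewrite (cardsD1 a) aX; lia.
rewrite !inE eq_sym => /andP [ab bX].
have [c [d abcd]] := card4_remaining2 aX bX ab.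
by exists b, c, d.
Qed.

End FourSets.

Section AttachedToK4.
Variables (n : nat) (adj : rel 'I_n) (X : {set 'I_n}).
Hypotheses (adj_sym : symmetric adj) (G_H43_free : H43_free adj).
Hypothesis X_K4 : induces_K4 adj X.

Lemma K4_cycle_and_triangle a b c d :
  {subset [:: a; b; c; d] <= X} -> uniq [:: a; b; c; d] ->
  [&& adj a b, adj b c, adj c d & adj d a] && [&& adj a c, adj c d & adj d a].
Proof.
case: X_K4 => _ Xadj sX; rewrite /= !inE !negb_or.
move=> /and4P [/and3P [ne_ab ne_ac ne_ad] /andP [ne_bc ne_bd] ne_cd _].
have inX y : y \in [:: a; b; c; d] -> y \in X := sX y.
by rewrite !Xadj ?inX ?inE ?eqxx ?orbT // 1?eq_sym.
Qed.

(* If [a = b], the triangle [a w w'] and a 4-cycle of the K4 through [a] form an H(4,3);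
   otherwise the 4-cycle [a w w' b] and the triangle on [a] and the two remaining
   vertices of the K4 do. *)
Lemma K4_attached_edge w w' a b :
  w \notin X -> w' \notin X -> w != w' -> adj w w' ->
  a \in X -> b \in X -> adj w a -> adj w' b -> False.
Proof.
move=> wX w'X ww' ww'adj aX bX wa w'b; have [cardX _] := X_K4.
have uniq_ext (s : seq 'I_n) : {subset s <= X} -> uniq s -> uniq (s ++ [:: w; w']).
  move=> sX us; rewrite cat_uniq us /= inE ww' orbF !andbT negb_or.
  by rewrite (contra (sX w) wX) (contra (sX w') w'X).
apply: G_H43_free; move: bX w'b; case: (eqVneq a b) => [<-{b} _ w'a | ab bX w'b].
  have [b [c [d [sX abcd]]]] := card4_remaining3 cardX aX.
  have /andP [cycle _] := K4_cycle_and_triangle sX abcd.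
  exists a, b, c, d, w, w'; split=> //; first exact: (uniq_ext _ sX abcd).
  by rewrite (adj_sym a w) wa ww'adj w'a.
have [c [d [sX abcd]]] := card4_remaining2 cardX aX bX ab.
have /andP [/and4P [ab_adj _ _ _] triangle] := K4_cycle_and_triangle sX abcd.
exists a, w, w', b, c, d; split=> //.
- have /perm_uniq -> : perm_eq [:: a; w; w'; b; c; d] ([:: a; b; c; d] ++ [:: w; w']).
    by rewrite perm_cons (perm_catC [:: w; w'] [:: b; c; d]).
  exact: (uniq_ext _ sX abcd).
- by rewrite (adj_sym a w) wa ww'adj w'b (adj_sym b a) ab_adj.
Qed.

End AttachedToK4.

Section EdgesToK4.
Variables (n : nat) (adj : rel 'I_n) (X W : {set 'I_n}).
Hypotheses (adj_sym : symmetric adj) (adj_irr : irreflexive adj).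
Hypotheses (G_H43_free : H43_free adj) (X_K4 : induces_K4 adj X).
Hypothesis XW_disjoint : [disjoint X & W].
Hypothesis W_attached : forall w, w \in W ->
  (#|[set a in X | adj w a]| <= 1)%N /\ (exists2 w', w' \in W & adj w w').

Let mate w := odflt w [pick w' in W | adj w w'].

Let mateP w : w \in W -> mate w \in W /\ adj w (mate w).
Proof.
move=> wW; rewrite /mate; case: pickP => [w' /andP [] // | noW].
by have [_ [w' w'W ww']] := W_attached wW; move: (noW w'); rewrite w'W ww'.
Qed.

Let mate_edge (w : 'I_n) := if (w < mate w)%N then (w, mate w) else (mate w, w).

Let mate_edge_inj w w' : mate_edge w = mate_edge w' -> w = w' \/ w' = mate w.
Proof.
by rewrite /mate_edge; case: ifP => _; case: ifP => _ [e1 e2];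
  [left | right | right | left]; congruence.
Qed.

(* Each edge [a w] from [X] to [W] is sent to the edge [w (mate w)] of [G[W]];
   two edges with the same image would give [K4_attached_edge]. *)
Lemma edges_between_K4_le : (edges_between adj X W <= edges_in adj W)%N.
Proof.
have WnotX w : w \in W -> w \notin X by move=> wW; rewrite (disjointFl XW_disjoint).
rewrite /edges_between -(card_in_imset (f := fun p => mate_edge p.2)); last first.
  move=> [a w] [a' w']; rewrite !inE /= => /and3P [aX wW aw] /and3P [a'X w'W a'w'].
  case/mate_edge_inj => [ww' | w'_mate].
    have [/card_le1_eqP Xw _] := W_attached wW.
    by subst w'; rewrite (Xw a' a) // !inE ?aX ?a'X /= adj_sym.
  have [mW wm] := mateP wW; rewrite -w'_mate in mW wm.
  have ne_ww' : w != w' by apply: contraTneq wm => ->; rewrite adj_irr.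
  rewrite adj_sym in aw; rewrite adj_sym in a'w'.
  by case: (K4_attached_edge adj_sym G_H43_free X_K4 (WnotX _ wW) (WnotX _ w'W) ne_ww' wm
    aX a'X aw a'w').
apply/subset_leq_card/subsetP => q /imsetP [[a w]]; rewrite inE /= => /and3P [_ wW _] ->.
have [mW wm] := mateP wW; rewrite /mate_edge.
have ne_wm : w != mate w by apply: contraTneq wm => <-; rewrite adj_irr.
case: ltngtP => [lt | gt | /val_inj eq_wm]; last by rewrite -eq_wm eqxx in ne_wm.
  by rewrite !inE /= lt wW mW wm.
by rewrite !inE /= gt wW mW adj_sym wm.
Qed.

End EdgesToK4.

Local Open Scope ring_scope.

(* [pm] over an arbitrary field, so that its roots can be located in the real
   closed field [algR] and transported to [algC]. *)
Definition pm_poly (R : fieldType) (m : nat) : {poly R} :=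
  'X^4 - m%:R *: 'X^2 - (m%:R - 2) *: 'X + (m%:R / 2 - 1)%:P.

Lemma pm_poly_algC m : pm m = pm_poly algC m.
Proof. by []. Qed.

Lemma map_pm_poly (R S : fieldType) (f : {rmorphism R -> S}) m :
  map_poly f (pm_poly R m) = pm_poly S m.
Proof.
rewrite /pm_poly rmorphD /= map_polyC !rmorphB /= !map_polyZ !map_polyXn map_polyX /=.
by rewrite !(rmorphB, fmorph_div, rmorph_nat, rmorph1).
Qed.

Lemma horner_pm_poly (R : fieldType) m (x : R) :
  (pm_poly R m).[x] = x ^+ 4 - m%:R * x ^+ 2 - (m%:R - 2) * x + (m%:R / 2 - 1).
Proof. by rewrite /pm_poly !hornerE. Qed.

Lemma pm_poly_root_ge (R : rcfType) m : (24 <= m)%N ->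
  exists2 x : R, 21 / 4 <= x & root (pm_poly R m) x.
Proof.
move=> m24; have M24 : 24 <= m%:R :> R by rewrite (ler_nat R 24 m).
have [||x /andP [x_ge _] px] := @poly_ivt R (pm_poly R m) (21 / 4) m%:R.
- lra.
- by rewrite !horner_pm_poly; apply/andP; split; nra.
- by exists x.
Qed.

Lemma lt_21_4_of_quadratic (R : realFieldType) (x : R) :
  0 <= x -> x ^+ 2 - 3 / 2 * x < 18 -> x < 21 / 4.
Proof. by move=> x0 hx; nra. Qed.

Lemma algR_leE (x y : algR) : (x <= y) = (algRval x <= algRval y).
Proof. by []. Qed.

Lemma algR_ltE (x y : algR) : (x < y) = (algRval x < algRval y).
Proof. by []. Qed.

Lemma rho_lt_rho' m (rho r' : algC) : 0 <= rho -> rho ^+ 2 - 3 / 2 * rho < 18 ->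
  (24 <= m)%N -> is_rho' m r' -> rho < r'.
Proof.
move=> rho_ge0 rho_quad m24 [_ _ r'_max].
pose rhoR := in_algR (ger0_real rho_ge0).
have rho_lt : rho < 21 / 4.
  have : rhoR < 21 / 4.
    apply: lt_21_4_of_quadratic; first exact: rho_ge0.
    by rewrite algR_ltE !(rmorphB, rmorphM, rmorphXn, fmorph_div, rmorph_nat).
  by rewrite algR_ltE fmorph_div !rmorph_nat.
have [x x_ge px] := pm_poly_root_ge algR m24.
apply: (lt_le_trans rho_lt); apply: le_trans (r'_max _ (algRvalP x) _).
  by move: x_ge; rewrite algR_leE fmorph_div !rmorph_nat.
by rewrite pm_poly_algC -(map_pm_poly algRval) fmorph_root.
Qed.

Theorem proposition7p1 (n : nat) (adj : rel 'I_n) (rho : algC) (u : 'I_n) :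
  simple_graph adj ->
  H43_free adj ->
  is_spectral_radius adj rho ->
  let N := nbhd adj u in
  let W := ~: (u |: N) in
  let Ap := [set v in N | [exists w in N, adj v w]] in
  induces_K4 adj Ap ->
  edges_in adj W = 2%N ->
  (forall w, w \in W ->
     (#|[set a in Ap | adj w a]| <= 1)%N /\ (exists2 w', w' \in W & adj w w')) ->
  rho ^+ 2 - rho * ((edges_in adj Ap)%:R - (#|Ap|)%:R + 3 / 2 - (edges_in adj W)%:R)
    < 2 * (edges_in adj Ap)%:R + (#|Ap|)%:R + (edges_between adj Ap W)%:R ->
  rho ^+ 2 - 3 / 2 * rho < 18 /\
  (forall r' : algC, ~~ odd (nedges adj) -> (24 <= nedges adj)%N ->
     is_rho' (nedges adj) r' -> rho < r').
Proof.
move=> [adj_sym adj_irr] G_H43_free [[l _ norm_l] _] N W Ap Ap_K4 eW W_attached rho_ineq.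
have rho_ge0 : 0 <= rho by rewrite -norm_l normr_ge0.
have [cardAp Ap_complete] := Ap_K4.
have eAp : edges_in adj Ap = 6%N by rewrite edges_in_complete // cardAp.
have AW_disjoint : [disjoint Ap & W].
  by rewrite disjoint_subset; apply/subsetP => x; rewrite !inE => /andP [-> _]; rewrite orbT.
have eApW : (edges_between adj Ap W <= 2)%N.
  by rewrite -eW; exact: edges_between_K4_le.
have rho_quad : rho ^+ 2 - 3 / 2 * rho < 18.
  move: rho_ineq; rewrite eAp cardAp eW.
  have -> : rho ^+ 2 - rho * (6%:R - 4%:R + 3 / 2 - 2%:R) = rho ^+ 2 - 3 / 2 * rho by ring.
  have -> : 2 * 6%:R + 4%:R + (edges_between adj Ap W)%:R
           = (16 + edges_between adj Ap W)%:R :> algC by rewrite natrD; ring.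
  by move=> /lt_le_trans; apply; rewrite (ler_nat _ _ 18); lia.
split=> // r' _ m24; exact: rho_lt_rho'.
Qed.
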